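(* Let $Q=\partial_\psi S$ be a $\partial_\psi$-delta operator, with $S\in\Sigma_\psi$ invertible, and let $(p_n)_{n\ge0}$ be its $\partial_\psi$-basic polynomial sequence. Then for all $n>0$: (1) $p_n(x)=Q'\,S^{-n-1}x^n$; (2) $p_n(x)=S^{-n}x^n-\frac{n_\psi}{n}\,(S^{-n})'\,x^{n-1}$; (3) $p_n(x)=\frac{n_\psi}{n}\,\hat x_\psi\,S^{-n}x^{n-1}$; (4) (ψ-Rodrigues formula) $p_n(x)=\frac{n_\psi}{n}\,\hat x_\psi\,(Q')^{-1}p_{n-1}(x)$, where $Q'$ is invertible in $\Sigma_\psi$.
   Context: Let $F$ be a field of characteristic $0$, $P=F[x]$. Fix $(\psi_n)_{n\ge0}$ in $F$ with $\psi_0=1$, $\psi_n\ne0$, $\psi_{-1}=0$; $n_\psi=\psi_{n-1}/\psi_n$, $n_\psi!=1/\psi_n$, $0_\psi!=1$. $\partial_\psi x^n=n_\psi x^{n-1}$ (linear); $E^a(\partial_\psi)=\sum_k\frac{a^k}{k_\psi!}\partial_\psi^k$. $\Sigma_\psi$: algebra of linear $T:P\to P$ commuting with all $E^a(\partial_\psi)$. A $\partial_\psi$-delta operator is $Q\in\Sigma_\psi$ with $Q(x)$ a nonzero constant; its $\partial_\psi$-basic sequence: $\deg p_n=n$, $p_0=1$, $p_n(0)=0$ for $n>0$, $Qp_n=n_\psi p_{n-1}$. $\hat x_\psi x^n=\frac{n+1}{(n+1)_\psi}x^{n+1}$ (linear); the Pincherle $\psi$-derivative of $T\in\Sigma_\psi$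 is $T'=T\hat x_\psi-\hat x_\psi T\in\Sigma_\psi$. *)

From mathcomp Require Import all_boot all_algebra.
Set Implicit Arguments. Unset Strict Implicit. Unset Printing Implicit Defensive.
Import GRing.Theory.
Local Open Scope ring_scope.

(* n_psi = psi_{n-1}/psi_n, with psi_{-1} = 0, so 0_psi = 0 *)
Definition npsi (F : fieldType) (psi : nat -> F) (n : nat) : F :=
  if n is m.+1 then psi m / psi m.+1 else 0.

(* partial_psi : x^n |-> n_psi x^{n-1}, extended linearly *)
Definition dpsi (F : fieldType) (psi : nat -> F) (p : {poly F}) : {poly F} :=
  \poly_(i < size p) (p`_i.+1 * npsi psi i.+1).

(* hat x_psi : x^n |-> (n+1)/(n+1)_psi x^{n+1}, extended linearly *)
Definition xhat (F : fieldType) (psi : nat -> F) (p : {poly F}) : {poly F} :=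
  \poly_(i < (size p).+1)
     (if i is j.+1 then p`_j * j.+1%:R / npsi psi j.+1 else 0).

(* E^a(partial_psi) = sum_k a^k / k_psi! partial_psi^k, with 1/k_psi! = psi_k;
   on a polynomial p the terms with k >= size p vanish. *)
Definition Eop (F : fieldType) (psi : nat -> F) (a : F) (p : {poly F}) : {poly F} :=
  \sum_(k < size p) (a ^+ k * psi k) *: iter k (dpsi psi) p.

Definition lin (F : fieldType) (T : {poly F} -> {poly F}) : Prop :=
  forall (a : F) (p q : {poly F}), T (a *: p + q) = a *: T p + T q.

Definition in_Sigma (F : fieldType) (psi : nat -> F) (T : {poly F} -> {poly F}) : Prop :=
  lin T /\ forall (a : F) (p : {poly F}), T (Eop psi a p) = Eop psi a (T p).

Definition is_delta (F : fieldType) (psi : nat -> F) (Q : {poly F} -> {poly F}) : Prop :=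
  in_Sigma psi Q /\ exists c : F, c != 0 /\ Q 'X = c%:P.

Definition basic_seq (F : fieldType) (psi : nat -> F) (Q : {poly F} -> {poly F})
  (p : nat -> {poly F}) : Prop :=
  (forall n, size (p n) = n.+1) /\ p 0%N = 1 /\
  (forall n, (0 < n)%N -> (p n).[0] = 0) /\
  (forall n, Q (p n) = npsi psi n *: p n.-1).
(* for n = 0 this reads Q p_0 = 0_psi p_{-1} = 0, since npsi 0 = 0 *)

Definition pincherle (F : fieldType) (psi : nat -> F) (T : {poly F} -> {poly F})
  : {poly F} -> {poly F} :=
  fun p => T (xhat psi p) - xhat psi (T p).

From mathcomp Require Import all_boot all_algebra.
From mathcomp Require Import ring.
Set Implicit Arguments. Unset Strict Implicit. Unset Printing Implicit Defensive.
Import GRing.Theory.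
Local Open Scope ring_scope.

(* In characteristic 0, [Sigma_psi] is exactly the algebra of linear operators commuting
   with [partial_psi]; it is commutative, and an element [T] is invertible as soon as
   [T 1 <> 0], its inverse being a Neumann series that terminates on each polynomial.
   Since [partial_psi' = 1], the Pincherle derivative of [Q = partial_psi S] is
   [Q' = S + partial_psi S'], which maps [1] to [S 1 <> 0], so [Q'] is invertible.
   From [(S^-n)' = -n S' S^-(n+1)] and [partial_psi x^n = n_psi x^(n-1)] one computes that
   [q_n := Q' S^-(n+1) x^n] equals the right-hand sides of (2) and (3); by (3) [q_n]
   vanishes at [0], and the commutation rule [Q xhat = xhat Q + Q'] gives
   [Q q_n = n_psi q_(n-1)].  The kernel of [Q] being the constants, [q_n] is the basic
   sequence, and (4) is (3) rewritten with [S^-n x^(n-1) = Q'^-1 q_(n-1)]. *)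

Section LinearOperators.
Variable F : fieldType.
Implicit Types (T U : {poly F} -> {poly F}) (p q : {poly F}).

Lemma linD T : lin T -> forall p q, T (p + q) = T p + T q.
Proof. by move=> hT p q; have := hT 1 p q; rewrite !scale1r. Qed.

Lemma lin0 T : lin T -> T 0 = 0.
Proof. by move=> hT; apply: (addrI (T 0)); rewrite -linD // !addr0. Qed.

Lemma linZ T : lin T -> forall a p, T (a *: p) = a *: T p.
Proof. by move=> hT a p; rewrite -[a *: p]addr0 hT lin0 // addr0. Qed.

Lemma linB T : lin T -> forall p q, T (p - q) = T p - T q.
Proof. by move=> hT p q; rewrite addrC -scaleN1r hT scaleN1r addrC. Qed.

Lemma lin_sum T : lin T -> forall (I : Type) (r : seq I) (P : pred I) (G : I -> {poly F}),
  T (\sum_(i <- r | P i) G i) = \sum_(i <- r | P i) T (G i).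
Proof.
move=> hT I r P G; elim/big_rec2: _ => [|i y1 y2 _ <-]; first exact: lin0.
exact: linD.
Qed.

Lemma lin_iter T k : lin T -> lin (iter k T).
Proof. by move=> hT; elim: k => [|k IH] a p q //=; rewrite IH hT. Qed.

End LinearOperators.

Section PsiCalculus.
Variables (F : fieldType) (psi : nat -> F).
Hypothesis psi_neq0 : forall n, psi n != 0.
Local Notation D := (dpsi psi).
Local Notation X := (xhat psi).
Implicit Types (p r : {poly F}).

Lemma npsiS_neq0 j : npsi psi j.+1 != 0.
Proof. by rewrite /= mulf_neq0 ?invr_eq0. Qed.

Lemma coef_dpsi p i : (D p)`_i = p`_i.+1 * npsi psi i.+1.
Proof.
rewrite /dpsi coef_poly; case: ltnP => // h.
by rewrite nth_default ?mul0r // (leq_trans h).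
Qed.

Lemma coef_xhat p i :
  (X p)`_i = if i is j.+1 then p`_j * j.+1%:R / npsi psi j.+1 else 0.
Proof.
rewrite /xhat coef_poly; case: i => [|j]; first by case: (_ < _)%N.
by rewrite ltnS; case: ltnP => // h; rewrite nth_default ?mul0r.
Qed.

Lemma coef_iter_dpsi k p i : (iter k D p)`_i = p`_(i + k) * (psi i / psi (i + k)).
Proof.
elim: k i => [|k IH] i; first by rewrite addn0 /= divff // mulr1.
rewrite iterS coef_dpsi IH /= addSnnS.
have := psi_neq0 i.+1; have := psi_neq0 (i + k.+1) => h1 h2.
by field; rewrite h1 h2.
Qed.

Lemma lin_dpsi : lin D.
Proof. by move=> a p q; apply/polyP=> i; rewrite coef_dpsi !coefD !coefZ !coef_dpsi; ring. Qed.

Lemma lin_xhat : lin X.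
Proof.
move=> a p q; apply/polyP=> i; rewrite coef_xhat !coefD !coefZ !coef_xhat.
by case: i => [|j]; [rewrite mulr0 addr0 | rewrite coefD coefZ; ring].
Qed.

Lemma dpsi_xhat p : D (X p) = X (D p) + p.
Proof.
apply/polyP=> i; rewrite coef_dpsi coefD !coef_xhat.
have := npsiS_neq0 i; case: i => [|j] h; first by rewrite add0r mulr1 divfK.
have := npsiS_neq0 j; rewrite coef_dpsi -[j.+2]addn1 natrD => h'.
by field; rewrite h' addn1 h.
Qed.

Lemma iter_dpsi_eq0 k p : (iter k D p == 0) = (size p <= k)%N.
Proof.
apply/eqP/idP => [Dk0|hk]; last first.
  apply/polyP=> i; rewrite coef_iter_dpsi coef0 nth_default ?mul0r //.
  by rewrite (leq_trans hk) ?leq_addl.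
apply/leq_sizeP => j hj; have /eqP := congr1 (fun q : {poly F} => q`_(j - k)) Dk0.
rewrite coef_iter_dpsi coef0 subnK // !mulf_eq0 invr_eq0 !(negbTE (psi_neq0 _)).
by rewrite !orbF => /eqP.
Qed.

Lemma dpsi_eq0 p : D p = 0 -> p = (p`_0)%:P.
Proof. by move=> Dp0; apply: size1_polyC; rewrite -(iter_dpsi_eq0 1) /= Dp0. Qed.

Lemma dpsi1 : D 1 = 0.
Proof. by apply/eqP; rewrite (iter_dpsi_eq0 1) size_poly1. Qed.

Lemma size_dpsi p : (size (D p) <= (size p).-1)%N.
Proof.
apply/leq_sizeP => j hj; rewrite coef_dpsi nth_default ?mul0r //.
by case: (size p) hj.
Qed.

Lemma dpsi_Xn n : D 'X^n = npsi psi n *: 'X^(n.-1).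
Proof.
apply/polyP => i; rewrite coef_dpsi coefZ !coefXn.
case: n => [|n]; first by rewrite /= !mul0r.
by rewrite eqSS; case: eqP => [->|_]; rewrite ?mul1r ?mulr1 ?mul0r ?mulr0.
Qed.

Lemma xhat_Xn n : X 'X^n = (n.+1%:R / npsi psi n.+1) *: 'X^(n.+1).
Proof.
apply/polyP => i; rewrite coef_xhat coefZ !coefXn.
case: i => [|i]; first by rewrite mulr0.
by rewrite eqSS coefXn; case: eqP => [->|_]; rewrite ?mul1r ?mulr1 ?mul0r ?mulr0.
Qed.

End PsiCalculus.

Section CharacteristicZero.
Variable F : fieldType.
Hypothesis F_char0 : [pchar F] =i pred0.

Lemma natr_char0_neq0 n : (0 < n)%N -> (n%:R : F) != 0.
Proof. by have /pcharf0P -> := F_char0; rewrite -lt0n. Qed.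

Lemma natr_inj : injective (fun n : nat => n%:R : F).
Proof.
have /pcharf0P natr_eq0 := F_char0.
suff le_eq m n : (m%:R : F) = n%:R -> (m <= n)%N -> m = n.
  by move=> m n /= e; case: (leqP m n) => [|/ltnW] h; [|symmetry]; apply: le_eq.
move=> e le_mn; apply/eqP; rewrite eqn_leq le_mn -subn_eq0 -natr_eq0.
by rewrite natrB // e subrr eqxx.
Qed.

Lemma poly_eq0_on_nat (P : {poly F}) : (forall n : nat, P.[n%:R] = 0) -> P = 0.
Proof.
move=> P0; apply/eqP/negPn/negP => nz_P.
have roots : all (root P) [seq n%:R | n <- iota 0 (size P)].
  by apply/allP => _ /mapP[n _ ->]; apply/rootP.
have := max_poly_roots nz_P roots.
rewrite size_map size_iota ltnn map_inj_uniq ?iota_uniq; first by move/(_ isT).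
exact: natr_inj.
Qed.

Lemma poly_identity_coef_eq0 M (v : nat -> {poly F}) :
  (forall a : F, \sum_(k < M) a ^+ k *: v k = 0) -> forall k, (k < M)%N -> v k = 0.
Proof.
move=> v0 k hk; apply/polyP => i; rewrite coef0.
pose P := \poly_(j < M) (v j)`_i.
suff P0 : P = 0 by have := congr1 (fun q : {poly F} => q`_k) P0; rewrite coef_poly hk coef0.
apply: poly_eq0_on_nat => n; rewrite horner_poly.
have := congr1 (fun q : {poly F} => q`_i) (v0 n%:R).
rewrite coef_sum coef0 => e; rewrite -[RHS]e; apply: eq_bigr => j _.
by rewrite coefZ mulrC.
Qed.

End CharacteristicZero.

Definition commute_dpsi (F : fieldType) (psi : nat -> F) (T : {poly F} -> {poly F}) :=
  forall p, T (dpsi psi p) = dpsi psi (T p).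

Section ShiftInvariantOperators.
Variables (F : fieldType) (psi : nat -> F).
Hypothesis psi_neq0 : forall n, psi n != 0.
Local Notation D := (dpsi psi).
Implicit Types (T U : {poly F} -> {poly F}) (p : {poly F}).

Lemma iter_commute_dpsi T k : commute_dpsi psi T -> forall p, T (iter k D p) = iter k D (T p).
Proof. by move=> TD; elim: k => [|k IH] p //=; rewrite TD IH. Qed.

Lemma commute_dpsi_iter T k : commute_dpsi psi T -> commute_dpsi psi (iter k T).
Proof. by move=> TD; elim: k => [|k IH] p //=; rewrite IH TD. Qed.

Lemma Eop_widen a p M : (size p <= M)%N ->
  Eop psi a p = \sum_(k < M) (a ^+ k * psi k) *: iter k D p.
Proof.
move=> hM; rewrite /Eop (big_ord_widen M (fun k => (a ^+ k * psi k) *: iter k D p) hM).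
rewrite big_mkcond; apply: eq_bigr => k _; case: ltnP => // hk.
by move: hk; rewrite -(iter_dpsi_eq0 psi_neq0) => /eqP ->; rewrite scaler0.
Qed.

Lemma in_Sigma_commute T : [pchar F] =i pred0 -> in_Sigma psi T -> commute_dpsi psi T.
Proof.
(* [T] commutes with [E^a = sum_k a^k psi_k partial_psi^k] for all [a]; the coefficient
   of [a^1] in this polynomial identity is [T partial_psi = partial_psi T]. *)
move=> F_char0 [lT TE] p; pose M := (maxn (size p) (size (T p))).+2.
have [sizeM sizeTM] : (size p <= M)%N /\ (size (T p) <= M)%N.
  by rewrite /M -addn2 !(leq_trans _ (leq_addr _ _)) ?leq_maxl ?leq_maxr.
pose v k := psi k *: (T (iter k D p) - iter k D (T p)).
have v0 a : \sum_(k < M) a ^+ k *: v k = 0.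
  have /eqP := TE a p; rewrite (Eop_widen a sizeM) (Eop_widen a sizeTM) lin_sum //.
  rewrite -subr_eq0 -sumrB => /eqP e; rewrite -[RHS]e; apply: eq_bigr => k _.
  by rewrite /v (linZ lT) !scalerA scalerBr.
have /eqP := poly_identity_coef_eq0 F_char0 v0 (k := 1) isT.
by rewrite scaler_eq0 (negbTE (psi_neq0 1)) subr_eq0 => /eqP.
Qed.

Lemma commute_in_Sigma T : lin T -> commute_dpsi psi T -> in_Sigma psi T.
Proof.
move=> lT TD; split=> // a p; pose M := maxn (size p) (size (T p)).
rewrite (@Eop_widen a p M) ?leq_maxl // (@Eop_widen a (T p) M) ?leq_maxr //.
by rewrite lin_sum //; apply: eq_bigr => k _; rewrite linZ // iter_commute_dpsi.
Qed.

Hypothesis psi0 : psi 0%N = 1.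

Lemma Sigma_expansion T n p : lin T -> commute_dpsi psi T -> (size p <= n)%N ->
  T p = \sum_(k < n) (psi k * (T 'X^k)`_0) *: iter k D p.
Proof.
move=> lT TD; elim: n p => [|n IH] p hp.
  by move: hp; rewrite leqn0 size_poly_eq0 => /eqP ->; rewrite big_ord0 lin0.
pose r := T p - \sum_(k < n.+1) (psi k * (T 'X^k)`_0) *: iter k D p.
have Dr : D r = 0.
  rewrite /r (linB (lin_dpsi psi)) -TD (IH (D p)); last first.
    by rewrite (leq_trans (size_dpsi psi p)) // -subn1 leq_subLR add1n.
  rewrite (lin_sum (lin_dpsi psi)) big_ord_recr /= (linZ (lin_dpsi psi)).
  rewrite -[D (iter n D p)]/(iter n.+1 D p).
  move: hp; rewrite -(iter_dpsi_eq0 psi_neq0) => /eqP ->; rewrite scaler0 addr0.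
  by apply/eqP; rewrite subr_eq0; apply/eqP/eq_bigr => k _; rewrite (linZ (lin_dpsi psi)) -iterSr.
have r0 : r`_0 = 0.
  have p_def : p = \sum_(k < n.+1) p`_k *: 'X^k.
    rewrite -poly_def; apply/polyP => i; rewrite coef_poly; case: ltnP => // hi.
    by rewrite nth_default // (leq_trans hp).
  rewrite /r coefB {1}p_def (lin_sum lT) !coef_sum.
  apply/eqP; rewrite subr_eq0; apply/eqP/eq_bigr => k _.
  rewrite (linZ lT) !coefZ coef_iter_dpsi // add0n psi0.
  by have := psi_neq0 k => ?; field.
by apply/eqP; rewrite -subr_eq0 -/r (dpsi_eq0 psi_neq0 Dr) r0.
Qed.

Lemma Sigma_commute T U : lin T -> commute_dpsi psi T -> lin U -> commute_dpsi psi U ->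
  forall p, T (U p) = U (T p).
Proof.
move=> lT TD lU UD p.
rewrite (Sigma_expansion lU UD (leq_maxl (size p) (size (T p)))).
rewrite (Sigma_expansion lU UD (leq_maxr (size p) (size (T p)))).
by rewrite (lin_sum lT); apply: eq_bigr => k _; rewrite (linZ lT) iter_commute_dpsi.
Qed.

End ShiftInvariantOperators.

Section Pincherle.
Variables (F : fieldType) (psi : nat -> F).
Hypothesis psi_neq0 : forall n, psi n != 0.
Local Notation D := (dpsi psi).
Local Notation X := (xhat psi).
Local Notation pin := (pincherle psi).
Implicit Types (T U : {poly F} -> {poly F}) (r : {poly F}).

Lemma lin_pincherle T : lin T -> lin (pin T).
Proof.
move=> lT a p q; rewrite /pincherle (lin_xhat psi a p q) lT lT (lin_xhat psi).
by rewrite -!mul_polyC; ring.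
Qed.

Lemma pincherle_commute T : lin T -> commute_dpsi psi T -> commute_dpsi psi (pin T).
Proof.
move=> lT TD r; rewrite /pincherle (linB (lin_dpsi psi)) -TD.
by rewrite !dpsi_xhat // (linD lT) TD; ring.
Qed.

Lemma pincherle_comp T U r : lin T -> pin (fun q => T (U q)) r = pin T (U r) + T (pin U r).
Proof. by move=> lT; rewrite /pincherle (linB lT); ring. Qed.

Lemma pincherle_dpsi r : pin D r = r.
Proof. by rewrite /pincherle dpsi_xhat // addrC addKr. Qed.

End Pincherle.

Lemma telescope_sumr_ord (V : zmodType) (f : nat -> V) M :
  \sum_(k < M) (f k - f k.+1) = f 0%N - f M.
Proof.
rewrite -opprB -(telescope_sumr f (leq0n M)) big_mkord -sumrN.
by apply: eq_bigr => k _; rewrite opprB.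
Qed.

Section SigmaInverse.
Variables (F : fieldType) (psi : nat -> F).
Hypothesis psi_neq0 : forall n, psi n != 0.
Local Notation D := (dpsi psi).
Variable T : {poly F} -> {poly F}.
Hypotheses (lT : lin T) (TD : commute_dpsi psi T) (T1_neq0 : T 1 != 0).
Implicit Types (r : {poly F}).

Lemma Sigma_const1 : T 1 = ((T 1)`_0)%:P.
Proof. by apply: (dpsi_eq0 psi_neq0); rewrite -TD dpsi1 // lin0. Qed.

Let c := (T 1)`_0.

Lemma Sigma_coef1_neq0 : c != 0.
Proof. by apply: contraNneq _ T1_neq0 => c0; rewrite Sigma_const1 -/c c0. Qed.

(* [T = c (1 - N)], where [N] lowers degrees, so [T^-1 = c^-1 (1 + N + N^2 + ...)]
   is a finite sum on every polynomial. *)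
Definition neumann_step r := r - c^-1 *: T r.
Local Notation N := neumann_step.

Lemma lin_neumann_step : lin N.
Proof. by move=> a p q; rewrite /N lT -!mul_polyC; ring. Qed.

Lemma neumann_step_commute : commute_dpsi psi N.
Proof. by move=> p; rewrite /N (linB (lin_dpsi psi)) TD (linZ (lin_dpsi psi)). Qed.

Lemma neumann_step_const a : N a%:P = 0.
Proof.
rewrite /N; have -> : T a%:P = a *: T 1 by rewrite -linZ // -mul_polyC mulr1.
rewrite Sigma_const1 -/c -!mul_polyC -!polyCM mulrCA mulVf ?Sigma_coef1_neq0 //.
by rewrite mulr1 subrr.
Qed.

Lemma neumann_stepE r : T r = c *: (r - N r).
Proof. by rewrite /N opprB addrC subrK scalerA divff ?scale1r ?Sigma_coef1_neq0. Qed.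

Lemma size_neumann_step r : (size (N r) <= (size r).-1)%N.
Proof.
case Er: (size r) => [|m].
  by move/eqP: Er; rewrite size_poly_eq0 => /eqP ->; rewrite (lin0 lin_neumann_step) size_poly0.
rewrite -(iter_dpsi_eq0 psi_neq0) -(iter_commute_dpsi _ neumann_step_commute).
have Dm : D (iter m D r) = 0.
  by apply/eqP; rewrite -[D _]/(iter m.+1 D r) iter_dpsi_eq0 // Er.
by rewrite (dpsi_eq0 psi_neq0 Dm) neumann_step_const.
Qed.

Lemma iter_neumann_step_eq0 k r : (size r <= k)%N -> iter k N r = 0.
Proof.
elim: k r => [|k IH] r hk; first by move: hk; rewrite leqn0 size_poly_eq0 => /eqP.
rewrite iterSr IH // (leq_trans (size_neumann_step r)) //.
by case: (size r) hk.
Qed.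

Definition Sigma_inv r := c^-1 *: \sum_(k < size r) iter k N r.

Lemma Sigma_inv_widen M r : (size r <= M)%N ->
  Sigma_inv r = c^-1 *: \sum_(k < M) iter k N r.
Proof.
move=> hM; rewrite /Sigma_inv (big_ord_widen M (fun k => iter k N r) hM) big_mkcond.
congr (_ *: _); apply: eq_bigr => k _; case: ltnP => // hk.
by rewrite iter_neumann_step_eq0.
Qed.

Lemma Sigma_invK r : T (Sigma_inv r) = r.
Proof.
rewrite /Sigma_inv (linZ lT) (lin_sum lT).
under eq_bigr => k _ do rewrite neumann_stepE -iterS.
rewrite -scaler_sumr (telescope_sumr_ord (fun k => iter k N r)); cbv beta.
rewrite (iter_neumann_step_eq0 (leqnn _)) subr0.
by rewrite scalerA mulVf ?scale1r ?Sigma_coef1_neq0.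
Qed.

Lemma Sigma_invKV r : Sigma_inv (T r) = r.
Proof.
set M := maxn (size r) (size (T r)).
rewrite (@Sigma_inv_widen M) ?leq_maxr // (neumann_stepE r).
under eq_bigr => k _ do
  rewrite (linZ (lin_iter k lin_neumann_step)) (linB (lin_iter k lin_neumann_step)) -iterSr.
rewrite -scaler_sumr (telescope_sumr_ord (fun k => iter k N r)); cbv beta.
rewrite (@iter_neumann_step_eq0 M) ?leq_maxl // subr0.
by rewrite scalerA mulVf ?scale1r ?Sigma_coef1_neq0.
Qed.

Lemma lin_Sigma_inv : lin Sigma_inv.
Proof.
move=> a p q; pose M := maxn (size (a *: p + q)) (maxn (size p) (size q)).
have [sp sq] : (size p <= M)%N /\ (size q <= M)%N by rewrite !leq_max !leqnn !orbT.
rewrite !(@Sigma_inv_widen M) ?leq_maxl //.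
rewrite scalerA mulrC -scalerA -scalerDr; congr (_ *: _); rewrite scaler_sumr -big_split.
by apply: eq_bigr => k _; apply: (lin_iter k lin_neumann_step).
Qed.

Lemma Sigma_inv_commute : commute_dpsi psi Sigma_inv.
Proof.
move=> r; rewrite (@Sigma_inv_widen (size r) (D r)) ?(leq_trans (size_dpsi psi r)) ?leq_pred //.
rewrite /Sigma_inv (linZ (lin_dpsi psi)) (lin_sum (lin_dpsi psi)); congr (_ *: _).
by apply: eq_bigr => k _; rewrite (commute_dpsi_iter k neumann_step_commute).
Qed.

End SigmaInverse.

Lemma basic_seq_unique (F : fieldType) (psi : nat -> F) (Q : {poly F} -> {poly F})
    (p q : nat -> {poly F}) :
  lin Q -> (forall r, Q r = 0 -> r = (r`_0)%:P) -> basic_seq psi Q p ->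
  q 0%N = 1 -> (forall n, (0 < n)%N -> (q n)`_0 = 0) ->
  (forall n, (0 < n)%N -> Q (q n) = npsi psi n *: q n.-1) ->
  forall n, p n = q n.
Proof.
move=> lQ kerQ [_ [p0 [p_at0 pQ]]] q0 q_at0 qQ; elim=> [|n IH]; first by rewrite p0 q0.
set d := p n.+1 - q n.+1.
have Qd : Q d = 0 by rewrite /d (linB lQ) pQ qQ //= IH subrr.
have d_at0 : d`_0 = 0 by rewrite /d coefB q_at0 // -horner_coef0 p_at0 // subrr.
by apply/eqP; rewrite -subr_eq0 -/d (kerQ _ Qd) d_at0.
Qed.

Section DeltaOperator.
Variables (F : fieldType) (psi : nat -> F).
Hypotheses (F_char0 : [pchar F] =i pred0) (psi0 : psi 0%N = 1) (psi_neq0 : forall n, psi n != 0).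
Local Notation D := (dpsi psi).
Local Notation X := (xhat psi).
Local Notation pin := (pincherle psi).
Variables (S Sinv Q : {poly F} -> {poly F}).
Hypotheses (S_Sigma : in_Sigma psi S) (Sinv_Sigma : in_Sigma psi Sinv).
Hypotheses (SK : forall q, S (Sinv q) = q) (SKV : forall q, Sinv (S q) = q).
Hypothesis QE : forall q, Q q = D (S q).
Implicit Types (r : {poly F}).

Let lS : lin S := S_Sigma.1.
Let lSinv : lin Sinv := Sinv_Sigma.1.
Let SD : commute_dpsi psi S := in_Sigma_commute psi_neq0 F_char0 S_Sigma.
Let SinvD : commute_dpsi psi Sinv := in_Sigma_commute psi_neq0 F_char0 Sinv_Sigma.

Lemma lin_delta : lin Q.
Proof. by move=> a r s; rewrite !QE lS (lin_dpsi psi). Qed.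

Lemma delta_commute : commute_dpsi psi Q.
Proof. by move=> r; rewrite !QE SD. Qed.

Lemma delta_kernel r : Q r = 0 -> r = (r`_0)%:P.
Proof. by rewrite QE => DSr0; apply: (dpsi_eq0 psi_neq0); rewrite -[r]SKV -SinvD DSr0 lin0. Qed.

Lemma pincherle_delta r : pin Q r = S r + D (pin S r).
Proof.
rewrite -[S r](pincherle_dpsi psi_neq0) -(pincherle_comp psi _ _ (lin_dpsi psi)).
by rewrite /pincherle !QE.
Qed.

Lemma pincherle_delta1 : pin Q 1 = S 1.
Proof.
rewrite pincherle_delta -(pincherle_commute psi_neq0 lS SD) dpsi1 //.
by rewrite (lin0 (lin_pincherle psi lS)) addr0.
Qed.

Lemma pincherle_Sinv r : pin Sinv r = - Sinv (pin S (Sinv r)).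
Proof.
have /(congr1 Sinv) : pin (fun q => S (Sinv q)) r = 0 by rewrite /pincherle !SK subrr.
rewrite pincherle_comp // (linD lSinv) SKV (lin0 lSinv) => /eqP.
by rewrite addrC addr_eq0 => /eqP.
Qed.

Lemma Sinv_pincherle r : Sinv (pin S r) = pin S (Sinv r).
Proof.
by apply: (Sigma_commute psi_neq0 psi0) => //; [apply: lin_pincherle | apply: pincherle_commute].
Qed.

Lemma pincherle_iter_Sinv n r : pin (iter n Sinv) r = - n%:R *: pin S (iter n.+1 Sinv r).
Proof.
elim: n r => [|n IH] r; first by rewrite /pincherle subrr oppr0 scale0r.
rewrite -[iter n.+1 Sinv]/(fun q => Sinv (iter n Sinv q)) pincherle_comp //.
rewrite pincherle_Sinv IH (linZ lSinv) !Sinv_pincherle -[Sinv (Sinv _)]/(iter n.+2 Sinv r).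
by rewrite -scaleN1r -scalerDl mulrS opprD.
Qed.

Definition delta_basic n := pin Q (iter n.+1 Sinv 'X^n).

Lemma delta_basic0 : delta_basic 0 = 1.
Proof.
rewrite /delta_basic pincherle_delta /= SK -(pincherle_commute psi_neq0 lS SD) -SinvD dpsi1 //.
by rewrite (lin0 lSinv) (lin0 (lin_pincherle psi lS)) addr0.
Qed.

Lemma delta_basic_Sinv n : (0 < n)%N -> delta_basic n =
  iter n Sinv 'X^n - (npsi psi n / n%:R) *: pin (iter n Sinv) 'X^(n.-1).
Proof.
move=> n_gt0; rewrite /delta_basic pincherle_delta.
rewrite -[iter n.+1 Sinv _]/(Sinv (iter n Sinv 'X^n)) SK.
rewrite -(pincherle_commute psi_neq0 lS SD) -SinvD -(commute_dpsi_iter n SinvD) dpsi_Xn.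
rewrite (linZ (lin_iter n lSinv)) (linZ lSinv) (linZ (lin_pincherle psi lS)) pincherle_iter_Sinv.
rewrite -[Sinv (iter n Sinv _)]/(iter n.+1 Sinv 'X^(n.-1)); congr (_ + _).
by rewrite scalerA -scaleNr mulrN opprK divfK ?natr_char0_neq0.
Qed.

Lemma delta_basic_xhat n : (0 < n)%N ->
  delta_basic n = (npsi psi n / n%:R) *: X (iter n Sinv 'X^(n.-1)).
Proof.
case: n => // m _; rewrite delta_basic_Sinv // -[m.+1.-1]/m /pincherle xhat_Xn.
have npsi_div_inv : (npsi psi m.+1 / m.+1%:R) * (m.+1%:R / npsi psi m.+1) = 1.
  by rewrite mulrA divfK ?natr_char0_neq0 // divff ?npsiS_neq0.
rewrite (linZ (lin_iter m.+1 lSinv)) scalerBr scalerA npsi_div_inv scale1r.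
by rewrite opprB addrC subrK.
Qed.

Lemma delta_basic_coef0 n : (0 < n)%N -> (delta_basic n)`_0 = 0.
Proof. by move=> n_gt0; rewrite delta_basic_xhat // coefZ coef_xhat mulr0. Qed.

Lemma delta_basic_rec n : (0 < n)%N -> Q (delta_basic n) = npsi psi n *: delta_basic n.-1.
Proof.
case: n => // m _; rewrite delta_basic_xhat // -[m.+1.-1]/m (linZ lin_delta).
have -> : Q (X (iter m.+1 Sinv 'X^m)) = X (Q (iter m.+1 Sinv 'X^m)) + delta_basic m.
  by rewrite /delta_basic /pincherle addrC subrK.
rewrite QE -[iter m.+1 Sinv _]/(Sinv (iter m Sinv 'X^m)) SK -(commute_dpsi_iter m SinvD).
have -> : X (iter m Sinv (D 'X^m)) = m%:R *: delta_basic m.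
  case: m => [|m].
    by rewrite dpsi_Xn scale0r (lin0 (lin_iter _ lSinv)) (lin0 (lin_xhat psi)) scale0r.
  rewrite delta_basic_xhat // scalerA mulrCA divff ?natr_char0_neq0 // mulr1.
  by rewrite dpsi_Xn (linZ (lin_iter _ lSinv)) (linZ (lin_xhat psi)).
by rewrite -{2}[delta_basic m]scale1r -scalerDl natr1 scalerA divfK ?natr_char0_neq0.
Qed.

Lemma delta_basic_eq p : basic_seq psi Q p -> forall n, p n = delta_basic n.
Proof.
move=> p_basic; apply: (basic_seq_unique lin_delta delta_kernel p_basic).
- exact: delta_basic0.
- exact: delta_basic_coef0.
- exact: delta_basic_rec.
Qed.

Lemma pincherle_delta1_neq0 : pin Q 1 != 0.
Proof.
rewrite pincherle_delta1; apply: contra_neq (@oner_neq0 {poly F}) => S1_0.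
by rewrite -(SKV 1) S1_0 lin0.
Qed.

End DeltaOperator.

Theorem mainTheorem11 (F : fieldType) (psi : nat -> F)
  (hchar : [pchar F] =i pred0)
  (hpsi0 : psi 0%N = 1) (hpsi : forall n, psi n != 0)
  (S Sinv Q : {poly F} -> {poly F}) (p : nat -> {poly F}) :
  in_Sigma psi S -> in_Sigma psi Sinv ->
  (forall q, S (Sinv q) = q) -> (forall q, Sinv (S q) = q) ->
  (forall q, Q q = dpsi psi (S q)) ->
  is_delta psi Q -> basic_seq psi Q p ->
  (forall n : nat, (0 < n)%N ->
     [/\ p n = pincherle psi Q (iter n.+1 Sinv ('X^n)),
         p n = iter n Sinv ('X^n)
               - (npsi psi n / n%:R) *: pincherle psi (iter n Sinv) ('X^(n.-1))
       & p n = (npsi psi n / n%:R) *: xhat psi (iter n Sinv ('X^(n.-1)))])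
  /\
  (exists Qpinv : {poly F} -> {poly F},
     [/\ in_Sigma psi Qpinv,
         (forall q, pincherle psi Q (Qpinv q) = q),
         (forall q, Qpinv (pincherle psi Q q) = q)
       & forall n : nat, (0 < n)%N ->
           p n = (npsi psi n / n%:R) *: xhat psi (Qpinv (p n.-1))]).
Proof.
move=> S_Sigma Sinv_Sigma SK SKV QE _ p_basic.
have p_eq := delta_basic_eq hchar hpsi0 hpsi S_Sigma Sinv_Sigma SK SKV QE p_basic.
have lQ := lin_delta S_Sigma QE.
have lQ' := lin_pincherle psi lQ.
have Q'D := pincherle_commute hpsi lQ (delta_commute hchar hpsi S_Sigma QE).
have Q'1 := pincherle_delta1_neq0 hchar hpsi S_Sigma Sinv_Sigma SKV QE.
have xhatE := delta_basic_xhat hchar hpsi0 hpsi S_Sigma Sinv_Sigma SK SKV QE.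
split=> [n n_gt0|].
  rewrite p_eq; split=> //; last exact: xhatE.
  exact: (delta_basic_Sinv hchar hpsi0 hpsi S_Sigma Sinv_Sigma SK SKV QE).
exists (Sigma_inv (pincherle psi Q)); split.
- apply: (commute_in_Sigma hpsi); first exact: (lin_Sigma_inv hpsi lQ' Q'D Q'1).
  exact: (Sigma_inv_commute hpsi lQ' Q'D Q'1).
- exact: (Sigma_invK hpsi lQ' Q'D Q'1).
- exact: (Sigma_invKV hpsi lQ' Q'D Q'1).
- case=> // m _; rewrite !p_eq /delta_basic (Sigma_invKV hpsi lQ' Q'D Q'1).
  exact: xhatE.
Qed.
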